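(* For all integers $n\ge 0$, $k\ge 0$, $d\ge 0$ with $(n,k,d)\neq(0,0,1)$, \[ p_n^{(\mathrm{pk},\mathrm{des})}(k,d)+p_n^{(\mathrm{pk},\mathrm{des})}(k,d-1)=\sum_{l,i,j}\binom{n}{l}\, b_l^{(\mathrm{pk},\mathrm{des})}(i,j)\, b_{n-l}^{(\mathrm{pk},\mathrm{des})}(k-i,\,d-l+j), \] where the sum runs over all integers $l,i,j$.
   Context: For a permutation $\pi=\pi_1\cdots\pi_n$ of $[n]$, a descent is a position $1\le i\le n-1$ with $\pi_i>\pi_{i+1}$, an ascent one with $\pi_i<\pi_{i+1}$; $\operatorname{des}(\pi)$, $\operatorname{asc}(\pi)$ are their numbers. A peak is a position $2\le i\le n-1$ with $\pi_{i-1}<\pi_i>\pi_{i+1}$; $\operatorname{pk}(\pi)$ is the number of peaks. A ballot permutation is a permutation $\pi$ with $\operatorname{asc}(\pi_1\cdots\pi_i)\ge\operatorname{des}(\pi_1\cdots\pi_i)$ for all $i\in[n]$; $\mathscr B_n$ is the set of ballot permutations of $[n]$, and $\mathscr B_0=\{\epsilon\}$ consists of the empty permutation (and $\mathcal S_0=\{\epsilon\}$), with $\operatorname{pk}(\epsilon)=\operatorname{des}(\epsilon)=0$. Define $p_n^{(\mathrm{pk},\mathrm{des})}(k,d)=|\{\pi\in\mathcal S_n:\operatorname{pk}(\pi)=k,\operatorname{des}(\pi)=d\}|$ and $b_n^{(\mathrm{pk},\mathrm{des})}(k,d)=|\{\pi\in\mathscr B_n:\operatorname{pk}(\pi)=k,\operatorname{des}(\pi)=d\}|$;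 these are $0$ if any of $n,k,d$ is negative. Binomial coefficients $\binom{n}{l}$ are $0$ unless $0\le l\le n$. *)

From mathcomp Require Import all_boot all_order all_algebra all_fingroup.
Set Implicit Arguments. Unset Strict Implicit. Unset Printing Implicit Defensive.

Definition des (s : seq nat) : nat :=
  \sum_(i < (size s).-1) (nth 0 s i.+1 < nth 0 s i).
Definition asc (s : seq nat) : nat :=
  \sum_(i < (size s).-1) (nth 0 s i < nth 0 s i.+1).
Definition pk (s : seq nat) : nat :=
  \sum_(i < (size s).-2) ((nth 0 s i < nth 0 s i.+1) && (nth 0 s i.+2 < nth 0 s i.+1)).

Definition ballot (s : seq nat) : bool :=
  [forall i : 'I_(size s), des (take i.+1 s) <= asc (take i.+1 s)].

Definition pword n (pi : 'S_n) : seq nat := [seq (val (pi i)).+1 | i <- enum 'I_n].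

Definition pcount (n k d : nat) : nat :=
  #|[set pi : 'S_n | (pk (pword pi) == k) && (des (pword pi) == d)]|.
Definition bcount (n k d : nat) : nat :=
  #|[set pi : 'S_n | ballot (pword pi) && (pk (pword pi) == k) && (des (pword pi) == d)]|.

Definition pz (n k d : int) : nat :=
  match n, k, d with Posz n', Posz k', Posz d' => pcount n' k' d' | _, _, _ => 0 end.
Definition bz (n k d : int) : nat :=
  match n, k, d with Posz n', Posz k', Posz d' => bcount n' k' d' | _, _, _ => 0 end.

(* Write pi = sigma tau with size sigma = l. Choosing the values of sigma gives the
   factor 'C(n, l), and ballotness, peaks and descents only depend on the relative order
   of the entries, so the right-hand side counts the pairs (pi, l) for which rev sigma and
   tau are ballot with the prescribed statistics. Encode pi by its word of descents
   (true) and ascents (false), and let h(t) be the number of ascents minus the number of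
   descents among its first t letters. Cutting pi at l removes one letter of this word,
   and rev sigma and tau are both ballot iff, on each side of that letter, h is minimal
   at the end adjacent to it. Exactly two cuts qualify: the descent leading into the
   first global minimum of h, and the ascent leaving its last global minimum. Neither
   cut creates or destroys a peak, and they contribute to p_n(k, d) and p_n(k, d - 1)
   respectively. *)

From mathcomp Require Import all_boot all_order all_algebra all_fingroup.
From mathcomp Require Import zify.
Set Implicit Arguments. Unset Strict Implicit. Unset Printing Implicit Defensive.

(** * Ballot words and their height *)

Definition ballotw (x : seq bool) : bool :=
  all (fun t => count id (take t x) <= count negb (take t x)) (iota 0 (size x).+1).

Lemma ballotwP x :
  reflect (forall t, t <= size x -> count id (take t x) <= count negb (take t x)) (ballotw x).
Proof.
apply: (iffP allP) => H t.
- by move=> Ht; apply: H; rewrite mem_iota.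
- by rewrite mem_iota add0n ltnS => /H.
Qed.

Definition ndes (w : seq bool) t := count id (take t w).

Lemma count_negb (x : seq bool) : count negb x = size x - count id x.
Proof. by rewrite -(count_predC id x) addKn. Qed.

Lemma ndes_split w a b : a <= b -> ndes w b = ndes w a + count id (drop a (take b w)).
Proof. by move=> ab; rewrite /ndes -{1}(cat_take_drop a (take b w)) count_cat take_takel. Qed.

Lemma ndes_mono w a b : a <= b -> ndes w a <= ndes w b <= ndes w a + (b - a).
Proof.
move=> ab; rewrite (ndes_split w ab) leq_addr leq_add2l.
by apply: leq_trans (count_size _ _) _; rewrite size_drop size_take; case: ifP; lia.
Qed.

Lemma ndes_le w a : ndes w a <= a.
Proof. by apply: leq_trans (count_size _ _) _; rewrite size_take; case: ifP; lia. Qed.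

Lemma ndes_oversize w t : size w <= t -> ndes w t = count id w.
Proof. by move=> Ht; rewrite /ndes take_oversize. Qed.

Lemma ndesS w t : ndes w t.+1 = ndes w t + nth false w t.
Proof.
have [lt|ge] := ltnP t (size w).
  by rewrite /ndes (take_nth false lt) -cats1 count_cat /= addn0.
by rewrite !ndes_oversize ?nth_default //; lia.
Qed.

Lemma ndes_le_count w t : ndes w t <= count id w.
Proof. by rewrite /ndes -{2}(cat_take_drop t w) count_cat leq_addr. Qed.

(* [h(a) <= h(b)] for the height [h(t) = t - 2 * ndes w t], without subtraction. *)
Definition height_le w a b := a + 2 * ndes w b <= b + 2 * ndes w a.

Lemma ballotw_drop w l : ballotw (drop l w) <-> (forall t, l <= t <= size w -> height_le w l t).
Proof.
have E t : l <= t -> count id (take (t - l) (drop l w)) = ndes w t - ndes w l.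
  by move=> lt; rewrite take_drop subnK // (ndes_split w lt) addKn.
split.
- move/ballotwP => H t /andP [lt tm].
  have := H (t - l); rewrite size_drop count_negb E // size_take size_drop.
  have := ndes_mono w lt; rewrite /height_le; case: ltnP; lia.
- move=> H; apply/ballotwP => t; rewrite size_drop => Ht.
  have lt : l <= t + l by rewrite leq_addl.
  have := E _ lt; rewrite addnK => Et; rewrite count_negb Et.
  have := H (t + l); have := ndes_mono w lt.
  rewrite size_take size_drop /height_le; case: ltnP; lia.
Qed.

Lemma ballotw_rev_take w l : l <= size w ->
  ballotw (rev (map negb (take l w))) <-> (forall t, t <= l -> height_le w l t).
Proof.
move=> lm; have sz : size (take l w) = l by rewrite size_takel.
have E t : t <= l ->
    count id (take t (rev (map negb (take l w)))) = t - (ndes w l - ndes w (l - t)).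
  move=> tl; rewrite take_rev size_map sz count_rev -map_drop count_map count_negb.
  by rewrite size_drop sz (ndes_split w (leq_subr t l)); lia.
split.
- move/ballotwP => H t tl.
  have := H (l - t); rewrite size_rev size_map sz count_negb size_take size_rev size_map sz.
  rewrite E ?leq_subr // subKn //; have := ndes_mono w tl; rewrite /height_le.
  case: ltnP; lia.
- move=> H; apply/ballotwP => t; rewrite size_rev size_map sz => tl.
  rewrite count_negb size_take size_rev size_map sz E //.
  have := H (l - t) (leq_subr t l); have := ndes_mono w (leq_subr t l).
  rewrite /height_le; case: ltnP; lia.
Qed.

(* Cutting a sequence after its [l]-th entry removes the letter [l.-1] of its descent
   word [w]; [junction w l] is that letter, taken to be [true] for [l = 0] and [false]
   (through [nth]) for [l = size w + 1]. *)
Definition split_ok w l := ballotw (rev (map negb (take l.-1 w))) && ballotw (drop l w).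

Definition junction (w : seq bool) l := if l is l'.+1 then nth false w l' else true.

Definition min_height w l := forall t, t <= size w -> height_le w l t.

Lemma split_okP w l : l <= (size w).+1 ->
  reflect ((forall t, t <= l.-1 -> height_le w l.-1 t) /\
           (forall t, l <= t <= size w -> height_le w l t)) (split_ok w l).
Proof.
move=> lm; have lm' : l.-1 <= size w by lia.
apply: (iffP andP) => [[/(ballotw_rev_take lm') h1 /ballotw_drop h2] | [h1 h2]] //.
by split; [apply/(ballotw_rev_take lm') | apply/ballotw_drop].
Qed.

Lemma split_ok_junction w l : l <= (size w).+1 ->
  (split_ok w l && junction w l) <->
  [/\ l <= size w, min_height w l & forall t, t < l -> ~~ height_le w t l].
Proof.
move=> lm; split.
- case/andP => /(split_okP lm) [h1 h2].
  case: l lm h1 h2 => [|l] lm h1 h2 /= jl; first by split=> // t tm; apply: h2.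
  have lw : l < size w by move: jl; case: ltnP => // ?; rewrite nth_default.
  rewrite /= in h1; have := ndesS w l; rewrite jl => st.
  split=> // t; last by move=> tl; have := h1 t (ltnSE tl); rewrite /height_le; lia.
  move=> tm; case: (leqP l.+1 t) => tl; first by apply: h2; rewrite tl.
  by have := h1 t (ltnSE tl); rewrite /height_le; lia.
- case=> lw gl st; apply/andP; split; last first.
    case: l lm lw gl st => // l _ _ _ st /=.
    by have := st l (ltnSn l); have := ndesS w l; rewrite /height_le; case: nth => /=; lia.
  apply/(split_okP lm); split; last by move=> t /andP [_]; apply: gl.
  case: l lm lw gl st => [|l] _ _ _ st /= t tl.
    by move: tl; rewrite leqn0 => /eqP ->; rewrite /height_le.
  have := st t tl; have := st l (ltnSn l); have := ndesS w l; rewrite /height_le.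
  by case: nth => /=; lia.
Qed.

Lemma split_ok_njunction w l : l <= (size w).+1 ->
  (split_ok w l && ~~ junction w l) <->
  [/\ 0 < l, min_height w l.-1 & forall t, l <= t <= size w -> ~~ height_le w t l.-1].
Proof.
move=> lm; split.
- case/andP => /(split_okP lm) [h1 h2].
  case: l lm h1 h2 => [|l] lm h1 h2 //= /negbTE jl.
  rewrite /= in h1; have := ndesS w l; rewrite jl => st.
  split=> // t; last by move=> /andP [tl tm]; have := h2 t; rewrite tl tm /height_le; lia.
  move=> tm; case: (leqP t l) => tl; first exact: h1.
  by have := h2 t; rewrite tl tm /height_le; lia.
- case=> l0 gl st; case: l lm l0 gl st => // l lm _ /= gl st.
  have jl : nth false w l = false.
    case: (ltnP l (size w)) => lw; last by rewrite nth_default.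
    have := st l.+1; rewrite ltnSn lw /height_le => /(_ isT).
    by have := ndesS w l; case: nth => //=; lia.
  apply/andP; split; last by rewrite /= jl.
  apply/(split_okP lm); split => /= t; first by move=> tl; apply: gl; lia.
  move=> /andP [tl tm]; have := st t; rewrite tl tm /height_le => /(_ isT).
  by have := ndesS w l; rewrite jl; lia.
Qed.

Definition min_heightb w l := (l <= size w) && all (height_le w l) (iota 0 (size w).+1).

Lemma min_heightbP w l : reflect (l <= size w /\ min_height w l) (min_heightb w l).
Proof.
apply: (iffP andP) => -[lw h]; split=> //.
  by move=> t tw; apply: (allP h); rewrite mem_iota add0n ltnS.
by apply/allP => t; rewrite mem_iota add0n ltnS; apply: h.
Qed.

Lemma exists_min_height w : exists l, min_heightb w l.
Proof.
pose K t := t + 2 * count id w - 2 * ndes w t.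
have exK : exists v, has (fun t => K t == v) (iota 0 (size w).+1).
  by exists (K 0); apply/hasP; exists 0 => //; rewrite mem_iota.
case: (ex_minnP exK) => v /hasP [l]; rewrite mem_iota add0n ltnS => lw /eqP Kl vmin.
exists l; apply/min_heightbP; split=> // t tw.
have : v <= K t by apply: vmin; apply/hasP; exists t => //; rewrite mem_iota add0n ltnS.
by rewrite -Kl /K /height_le; have := ndes_le_count w t; have := ndes_le_count w l; lia.
Qed.

Lemma exists_split_junction w : exists2 l, l <= (size w).+1 & split_ok w l && junction w l.
Proof.
case: (ex_minnP (exists_min_height w)) => l /min_heightbP [lw gl] lmin.
exists l; first exact: leqW.
apply/(split_ok_junction (leqW lw)); split=> // t tl; apply/negP => hle.
suff : l <= t by rewrite leqNgt tl.
apply/lmin/min_heightbP; split=> [|u uw]; first lia.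
by have := gl u uw; move: hle; rewrite /height_le; lia.
Qed.

Lemma exists_split_njunction w : exists2 l, l <= (size w).+1 & split_ok w l && ~~ junction w l.
Proof.
have ubM l : min_heightb w l -> l <= size w by case/andP.
case: (ex_maxnP (exists_min_height w) ubM) => l /min_heightbP [lw gl] lmax.
exists l.+1 => //.
apply/(split_ok_njunction (lw : l.+1 <= (size w).+1)); split=> // t /andP [tl tw].
apply/negP => hle; suff : t <= l by rewrite leqNgt tl.
apply/lmax/min_heightbP; split=> // u uw.
by have := gl u uw; move: hle; rewrite /height_le /=; lia.
Qed.

Lemma split_junction_uniq w a b : a <= (size w).+1 -> b <= (size w).+1 ->
  split_ok w a && junction w a -> split_ok w b && junction w b -> a = b.
Proof.
wlog ab : a b / a <= b => [H|] am bm.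
  by case: (leqP a b) => ?; [apply: H | move=> ha hb; apply/esym/H => //; apply: ltnW].
case/(split_ok_junction am) => _ ga _ /(split_ok_junction bm) [bw _ sb].
by case: (ltngtP a b) ab => // alb _; have := sb a alb; rewrite ga ?(leq_trans (ltnW alb)).
Qed.

Lemma split_njunction_uniq w a b : a <= (size w).+1 -> b <= (size w).+1 ->
  split_ok w a && ~~ junction w a -> split_ok w b && ~~ junction w b -> a = b.
Proof.
wlog ab : a b / a <= b => [H|] am bm.
  by case: (leqP a b) => ?; [apply: H | move=> ha hb; apply/esym/H => //; apply: ltnW].
case/(split_ok_njunction am) => _ _ sa /(split_ok_njunction bm) [b0 gb _].
case: (ltngtP a b) ab => // alb _.
have h : a <= b.-1 <= size w by apply/andP; split; lia.
by have := sa _ h; rewrite gb //; lia.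
Qed.

Lemma sum_bool_unique N (P : pred nat) :
  (exists2 a, a < N & P a) -> (forall a b, a < N -> b < N -> P a -> P b -> a = b) ->
  \sum_(l < N) P l = 1.
Proof.
case=> a aN Pa Puniq; rewrite (bigD1 (Ordinal aN)) //= Pa big1 // => l /eqP ne.
case Pl: (P l) => //; case: ne; apply: val_inj.
exact: Puniq (ltn_ord l) aN Pl Pa.
Qed.

Fixpoint peaksw (x : seq bool) : nat :=
  if x is a :: y then (if y is b :: _ then (~~ a && b) + peaksw y else 0) else 0.

Lemma peaksw_cat x b y : peaksw (x ++ b :: y) =
  peaksw x + peaksw y + (~~ last true x && b) + (~~ b && head false y).
Proof.
elim: x => [|a x IH] /=; first by case: y => [|c y] /=; lia.
by rewrite IH; case: x IH => [|c x] IH /=; lia.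
Qed.

Lemma peaksw_split w l : l <= (size w).+1 -> split_ok w l ->
  peaksw w = peaksw (take l.-1 w) + peaksw (drop l w).
Proof.
move=> lm /(split_okP lm) [h1 h2].
case: l lm h1 h2 => [|l] lm h1 h2 /=; first by rewrite take0 drop0.
have [lw|wl] := ltnP l (size w); last by rewrite take_oversize // drop_oversize ?addn0 // ltnW.
rewrite [in LHS](_ : w = take l w ++ nth false w l :: drop l.+1 w); last first.
  by rewrite -drop_nth // cat_take_drop.
rewrite peaksw_cat.
have -> : ~~ last true (take l w) && nth false w l = false.
  case: l lm lw h1 {h2} => [|m] _ lw h1; first by rewrite take0.
  rewrite -nth_last size_takel ?(ltnW lw) //= nth_take // (set_nth_default false) ?(ltnW lw) //.
  have := h1 m (leqnSn m); rewrite /height_le (ndesS w m) /=.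
  by case: (nth false w m) => //=; lia.
have -> : ~~ nth false w l && head false (drop l.+1 w) = false.
  rewrite -nth0 nth_drop addn0.
  have [l2|] := ltnP l.+1 (size w); last by move/(nth_default false) ->; rewrite andbF.
  have := h2 l.+2; rewrite ltnW ?ltnSn //= l2 /height_le (ndesS w l.+1) => /(_ isT).
  by case: (nth false w l.+1); rewrite ?andbF //=; lia.
by rewrite !addn0.
Qed.

Lemma count_split w l : l <= (size w).+1 ->
  count id (drop l w) + l = count negb (take l.-1 w) + count id w + ~~ junction w l.
Proof.
case: l => [|l] lm /=; first by rewrite drop0 take0 addn0.
have -> : count id w = ndes w l.+1 + count id (drop l.+1 w).
  by rewrite /ndes -count_cat cat_take_drop.
rewrite ndesS count_negb -/(ndes w l) size_takel; last lia.
by have := ndes_le w l; case: nth => /=; lia.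
Qed.

Lemma sum_split_ok w k d :
  \sum_(l < (size w).+2) [&& split_ok w l, peaksw (take l.-1 w) + peaksw (drop l w) == k &
       count id (drop l w) + l == d + count negb (take l.-1 w)]
  = ((peaksw w == k) && (count id w == d)) + ((peaksw w == k) && ((count id w).+1 == d)).
Proof.
rewrite (eq_bigr (fun l : 'I_(size w).+2 =>
    (split_ok w l && junction w l) * ((peaksw w == k) && (count id w == d)) +
    (split_ok w l && ~~ junction w l) * ((peaksw w == k) && ((count id w).+1 == d)))); last first.
  move=> [l /= lm] _; case ok: (split_ok w l) => //=.
  rewrite -(peaksw_split lm ok) (count_split lm) -addnA addnC eqn_add2r.
  by case: junction; rewrite /= ?addn0 ?addn1; case: (_ == k); case: (_ == d).
rewrite big_split /= -!big_distrl /=.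
rewrite (@sum_bool_unique _ (fun l => split_ok w l && junction w l)); last 2 first.
- by case: (exists_split_junction w) => l lm h; exists l.
- by move=> a b am bm; apply: split_junction_uniq.
rewrite (@sum_bool_unique _ (fun l => split_ok w l && ~~ junction w l)) ?mul1n //.
- by case: (exists_split_njunction w) => l lm h; exists l.
- by move=> a b am bm; apply: split_njunction_uniq.
Qed.

(** * Descent words of sequences *)

Fixpoint desw (s : seq nat) : seq bool :=
  if s is a :: t then (if t is b :: _ then (b < a) :: desw t else [::]) else [::].

Lemma size_desw s : size (desw s) = (size s).-1.
Proof. by elim: s => [|a [|b t] IH] //=; rewrite IH. Qed.

Lemma desw_cons2 a b t : desw [:: a, b & t] = (b < a) :: desw (b :: t).
Proof. by []. Qed.

Lemma des_cons a b t : des [:: a, b & t] = (b < a) + des (b :: t).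
Proof. by rewrite /des /= big_ord_recl. Qed.

Lemma asc_cons a b t : asc [:: a, b & t] = (a < b) + asc (b :: t).
Proof. by rewrite /asc /= big_ord_recl. Qed.

Lemma pk_cons a b c t : pk [:: a, b, c & t] = ((a < b) && (c < b)) + pk [:: b, c & t].
Proof. by rewrite /pk /= big_ord_recl. Qed.

Lemma ltn_neqNgt (a b : nat) : b != a -> (a < b) = ~~ (b < a).
Proof. by move=> ne; rewrite ltn_neqAle eq_sym ne leqNgt. Qed.

Lemma des_desw s : des s = count id (desw s).
Proof. by elim: s => [|a [|b t] IH]; rewrite ?des_cons ?IH // /des big_ord0. Qed.

Lemma asc_desw s : uniq s -> asc s = count negb (desw s).
Proof.
elim: s => [|a [|b t] IH]; try by rewrite /asc big_ord0.
move=> /andP [ha ut].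
by rewrite asc_cons IH //= ltn_neqNgt // (memPn ha _ (mem_head _ _)).
Qed.

Lemma pk_desw s : uniq s -> pk s = peaksw (desw s).
Proof.
elim: s => [|a [|b [|c t]] IH]; try by rewrite /pk big_ord0.
move=> /andP [ha ut].
by rewrite pk_cons IH //= ltn_neqNgt // (memPn ha _ (mem_head _ _)).
Qed.

Lemma desw_take j s : desw (take j s) = take j.-1 (desw s).
Proof.
elim: s j => [|a t IH] [|j] //=; first by rewrite take0.
by case: t IH => [|b t] IH //=; case: j => [|j] //; rewrite (IH j.+1).
Qed.

Lemma desw_drop j s : desw (drop j s) = drop j (desw s).
Proof.
elim: s j => [|a t IH] [|j] //=; first by rewrite drop0.
by rewrite IH; case: t IH => [|b t] IH //=; rewrite drop_nil.
Qed.

Lemma desw_rcons s x y : s != [::] -> desw (rcons s x) = rcons (desw s) (x < last y s).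
Proof.
elim: s y => [|a [|b t] IH] y //= _.
by have /= -> := IH y isT.
Qed.

Lemma desw_rev s : uniq s -> desw (rev s) = rev (map negb (desw s)).
Proof.
elim: s => [|a [|b t] IH] //= /andP [ha hu].
rewrite rev_cons (desw_rcons a b); last by rewrite rev_cons; case: (rev t).
by rewrite IH // rev_cons last_rcons rev_cons /= ltn_neqNgt // (memPn ha _ (mem_head _ _)).
Qed.

Lemma ballot_desw s : uniq s -> ballot s = ballotw (desw s).
Proof.
move=> us; apply/forallP/ballotwP => [H t|H i].
- rewrite size_desw => ht.
  case: s us H ht => [|a s'] // us H ht.
  have := H (Ordinal (ht : t < size (a :: s'))).
  by rewrite des_desw asc_desw ?take_uniq // desw_take.
- rewrite des_desw asc_desw ?take_uniq // desw_take /=; apply: H.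
  by rewrite size_desw; have := ltn_ord i; lia.
Qed.

Lemma desw_map f s : {in s &, {mono f : x y / x < y}} -> desw (map f s) = desw s.
Proof.
elim: s => [|a [|b t] IH] // H; rewrite [map f _]/= !desw_cons2.
rewrite H ?mem_head ?inE ?eqxx ?orbT //; congr (_ :: _); apply: IH => x y hx hy.
by apply: H; rewrite inE ?hx ?hy orbT.
Qed.

Lemma peaksw_rcons x b : peaksw (rcons x b) = peaksw x + (~~ last true x && b).
Proof. by rewrite -cats1 peaksw_cat /= andbF !addn0. Qed.

Lemma peaksw_rev_negb x : peaksw (rev (map negb x)) = peaksw x.
Proof.
elim: x => [|a [|b x] IH] //.
rewrite map_cons rev_cons peaksw_rcons IH map_cons rev_cons last_rcons /=.
by rewrite negbK andbC addnC.
Qed.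

(* The cut [p = sigma ++ tau] at [l] is counted by the right-hand side: [rev sigma] and
   [tau] are ballot with statistics [(i, j)] and [(k - i, d - l + j)] for some [i], [j]. *)
Definition ballot_split k d l (p : seq nat) :=
  [&& ballot (rev (take l p)), ballot (drop l p),
      pk (rev (take l p)) + pk (drop l p) == k & des (drop l p) + l == d + des (rev (take l p))].

Lemma sum_ballot_split p k d : uniq p -> 0 < size p ->
  \sum_(l < (size p).+1) ballot_split k d l p
  = ((pk p == k) && (des p == d)) + ((pk p == k) && ((des p).+1 == d)).
Proof.
move=> up p0; rewrite pk_desw // des_desw -sum_split_ok size_desw prednK //.
apply: eq_bigr => -[l lp] _ /=.
have ut : uniq (take l p) := take_uniq l up.
have ur : uniq (rev (take l p)) by rewrite rev_uniq.
have ud : uniq (drop l p) := drop_uniq l up.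
rewrite /ballot_split /split_ok (ballot_desw ur) (ballot_desw ud) (pk_desw ur) (pk_desw ud).
rewrite !des_desw (desw_rev ut) desw_take desw_drop peaksw_rev_negb count_rev count_map.
by rewrite andbA.
Qed.

(** * Counting permutations by their two pieces *)

Definition order_invariant (P : pred (seq nat)) := forall (f : nat -> nat) (s : seq nat),
  uniq s -> {in s &, {mono f : x y / x < y}} -> P (map f s) = P s.

Lemma ltn_mono_in_inj (f : nat -> nat) (s : seq nat) :
  {in s &, {mono f : x y / x < y}} -> {in s &, injective f}.
Proof.
move=> fmono x y hx hy fxy; case: (ltngtP x y) => // xy.
  by have := fmono x y hx hy; rewrite fxy ltnn xy.
by have := fmono y x hy hx; rewrite fxy ltnn xy.
Qed.

Lemma desw_order_invariant (P : pred (seq nat)) (R : pred (seq bool)) :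
  (forall s, uniq s -> P s = R (desw s)) -> order_invariant P.
Proof.
move=> PR f s us fmono.
by rewrite PR ?PR ?desw_map // (map_inj_in_uniq (ltn_mono_in_inj fmono)).
Qed.

Lemma permutations_map (T1 T2 : eqType) (f : T1 -> T2) (g : T2 -> T1) (W : seq T1) :
  {in W, cancel f g} -> perm_eq (permutations (map f W)) (map (map f) (permutations W)).
Proof.
move=> fK.
have gfK u : perm_eq u W -> map g (map f u) = u.
  move=> pu; rewrite -map_comp -[RHS]map_id; apply/eq_in_map => x hx /=.
  by apply: fK; rewrite -(perm_mem pu).
have inj : {in permutations W &, injective (map f)}.
  move=> u v; rewrite !mem_permutations => pu pv e.
  by rewrite -(gfK u pu) -(gfK v pv) e.
apply: uniq_perm; rewrite ?(map_inj_in_uniq inj) ?permutations_uniq //.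
move=> t; rewrite mem_permutations; apply/idP/mapP => [pt|[u]]; last first.
  by rewrite mem_permutations => pu ->; apply: perm_map.
exists (map g t); first by rewrite mem_permutations -(gfK W (perm_refl W)) perm_map.
rewrite -map_comp -[LHS]map_id; apply/esym/eq_in_map => y /=.
by rewrite (perm_mem pt) => /mapP [x hx ->]; rewrite fK.
Qed.

Definition count_perms (P : pred (seq nat)) (V : seq nat) := count P (permutations V).

Lemma count_perms_perm P V V' : perm_eq V V' -> count_perms P V = count_perms P V'.
Proof. by move=> pV; apply/seq.permP/perm_permutations. Qed.

Lemma count_perms_map P (f g : nat -> nat) (W : seq nat) :
  order_invariant P -> uniq W -> {in W, cancel f g} -> {in W &, {mono f : x y / x < y}} ->
  count_perms P (map f W) = count_perms P W.
Proof.
move=> invP uW fK fmono; rewrite /count_perms (seq.permP (permutations_map fK)) count_map.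
apply: eq_in_count => u; rewrite mem_permutations => pu /=.
apply: invP; first by rewrite (perm_uniq pu).
by move=> x y hx hy; apply: fmono; rewrite -(perm_mem pu).
Qed.

(* Standardization: [V] is the image of [1, ..., size V] by the increasing
   map [i |-> (sort leq V)_(i-1)]. *)
Lemma count_perms_std P V : order_invariant P -> uniq V ->
  count_perms P V = count_perms P (iota 1 (size V)).
Proof.
move=> invP uV; set S := sort leq V.
have pS : perm_eq S V by rewrite perm_sort.
have sS : sorted ltn S by rewrite ltn_sorted_uniq_leq sort_uniq uV sort_sorted //; apply: leq_total.
have szS : size S = size V by rewrite size_sort.
pose f x := nth 0 S x.-1; pose g y := (index y S).+1.
rewrite -(count_perms_perm P pS).
have -> : S = map f (iota 1 (size V)).
  apply: (@eq_from_nth _ 0) => [|i hi]; first by rewrite size_map size_iota.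
  by rewrite (nth_map 0) ?size_iota -?szS // nth_iota -?szS.
apply: (count_perms_map (g := g)) => //; first exact: iota_uniq.
- move=> x; rewrite mem_iota => /andP [x1 x2].
  by rewrite /g /f index_uniq ?sort_uniq //; [lia | rewrite szS; lia].
- move=> x y; rewrite !mem_iota => /andP [x1 x2] /andP [y1 y2].
  have hom := sorted_ltn_nth ltn_trans 0 sS.
  have hx : x.-1 \in [pred n | n < size S] by rewrite inE szS; lia.
  have hy : y.-1 \in [pred n | n < size S] by rewrite inE szS; lia.
  rewrite /f; case: (ltngtP x y) => h; last by rewrite h ltnn.
  + by apply: hom => //; lia.
  + by apply/negbTE; rewrite -leqNgt ltnW //; apply: hom => //; lia.
Qed.

Fixpoint ksubseqs (T : Type) (U : seq T) (l : nat) : seq (seq T) :=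
  match U with
  | [::] => if l is 0 then [:: [::]] else [::]
  | x :: U' => if l is l'.+1 then map (cons x) (ksubseqs U' l') ++ ksubseqs U' l else [:: [::]]
  end.

Lemma cons_injr (T : Type) (x : T) : injective (cons x).
Proof. by move=> s t []. Qed.

Lemma size_ksubseqs (T : Type) (U : seq T) l : size (ksubseqs U l) = 'C(size U, l).
Proof. by elim: U l => [|x U IH] [|l] //=; rewrite size_cat size_map !IH binS addnC. Qed.

Lemma cons_head_notin_subseq (T : eqType) (x : T) A U : x \notin U -> subseq (x :: A) U = false.
Proof. by move=> xU; apply: contraNF xU => /mem_subseq; apply; apply: mem_head. Qed.

Lemma mem_ksubseqs (T : eqType) (U : seq T) l A : uniq U ->
  (A \in ksubseqs U l) = subseq A U && (size A == l).
Proof.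
elim: U l A => [|x U IH] l A /=; first by case: l => [|l] _; rewrite ?inE; case: A.
case/andP=> xU uU; case: l => [|l]; first by rewrite inE; case: A => [|a A] //=; rewrite andbF.
rewrite mem_cat IH //; case: A => [|a A] /=.
  by rewrite andbF orbF; apply/negbTE/negP => /mapP [].
have [->|ne] := eqVneq a x.
  by rewrite (mem_map (@cons_injr _ x)) IH // cons_head_notin_subseq // orbF.
by rewrite (_ : a :: A \in _ = false) //; apply/negbTE/mapP => -[B _ [e _]]; rewrite e eqxx in ne.
Qed.

Lemma uniq_ksubseqs (T : eqType) (U : seq T) l : uniq U -> uniq (ksubseqs U l).
Proof.
elim: U l => [|x U IH] [|l] //= /andP [xU uU].
rewrite cat_uniq (map_inj_uniq (@cons_injr _ x)) !IH //= andbT.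
apply/hasPn => B; rewrite mem_ksubseqs // => /andP [sB _]; apply/mapP => -[C _ eB].
by rewrite eB cons_head_notin_subseq in sB.
Qed.

Definition arrangements (U : seq nat) l := [seq a | A <- ksubseqs U l, a <- permutations A].

Lemma perm_filter_mem (U a : seq nat) : uniq U -> uniq a -> {subset a <= U} ->
  perm_eq a [seq x <- U | x \in a].
Proof.
move=> uU ua aU; apply: uniq_perm => //; first exact: filter_uniq.
by move=> x; rewrite mem_filter andb_idr //; apply: aU.
Qed.

Lemma mem_arrangements U l a : uniq U ->
  (a \in arrangements U l) = [&& uniq a, size a == l & all (mem U) a].
Proof.
move=> uU; apply/allpairsPdep/and3P => [[A [a' [hA ha' ->]]]|[ua /eqP sa /allP aU]].
  move: hA ha'; rewrite mem_ksubseqs // mem_permutations => /andP [sA /eqP <-] pa.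
  rewrite (perm_uniq pa) (subseq_uniq sA uU) (perm_size pa) eqxx; split=> //.
  by apply/allP => x; rewrite (perm_mem pa) => /(mem_subseq sA).
exists [seq x <- U | x \in a], a; split => //.
  by rewrite mem_ksubseqs // filter_subseq -(perm_size (perm_filter_mem uU ua aU)) sa /=.
by rewrite mem_permutations perm_filter_mem.
Qed.

Lemma uniq_arrangements U l : uniq U -> uniq (arrangements U l).
Proof.
move=> uU; apply: allpairs_uniq_dep => [|A _|]; rewrite ?uniq_ksubseqs ?permutations_uniq //.
move=> [A1 a1] [A2 a2] /allpairsPdep [B1 [b1 [h1 hb1 [-> ->]]]].
move=> /allpairsPdep [B2 [b2 [h2 hb2 [-> ->]]]] /= eb; subst b2.
move: h1 h2 hb1 hb2; rewrite !mem_ksubseqs // !mem_permutations => /andP [s1 _] /andP [s2 _] p1 p2.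
suff -> : B1 = B2 by [].
rewrite (subseq_uniqP uU s1) (subseq_uniqP uU s2); apply: eq_filter => x.
by rewrite -(perm_mem p1) (perm_mem p2).
Qed.

Lemma perm_permutations_arrangements U l : uniq U -> l <= size U ->
  perm_eq (permutations U)
    [seq a ++ b | a <- arrangements U l, b <- permutations [seq x <- U | x \notin a]].
Proof.
move=> uU lU; apply: uniq_perm; first exact: permutations_uniq.
  apply: allpairs_uniq_dep => [|a _|]; rewrite ?uniq_arrangements ?permutations_uniq //.
  move=> [a1 b1] [a2 b2] /allpairsPdep [c1 [d1 [h1 _ [-> ->]]]].
  move=> /allpairsPdep [c2 [d2 [h2 _ [-> ->]]]] /= e.
  move: h1 h2; rewrite !mem_arrangements // => /and3P [_ /eqP s1 _] /and3P [_ /eqP s2 _].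
  have ec : c1 = c2 by rewrite -(take_size_cat d1 s1) e take_size_cat.
  have ed : d1 = d2 by rewrite -(drop_size_cat d1 s1) e drop_size_cat.
  by rewrite ec ed.
move=> p; rewrite mem_permutations; apply/idP/allpairsPdep => [pU|[a [b [ha hb ->]]]].
  have up : uniq p by rewrite (perm_uniq pU).
  exists (take l p), (drop l p); split; rewrite ?cat_take_drop //.
    rewrite mem_arrangements // take_uniq //= size_takel ?(perm_size pU) // eqxx /=.
    by apply/allP => x /mem_take; rewrite (perm_mem pU).
  rewrite mem_permutations; apply: uniq_perm; rewrite ?drop_uniq ?filter_uniq //.
  move=> x; rewrite mem_filter -(perm_mem pU) -[in x \in p](cat_take_drop l p) mem_cat.
  have /hasPn dt : ~~ has (mem (take l p)) (drop l p).
    by have := up; rewrite -{1}(cat_take_drop l p) cat_uniq => /and3P [].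
  case xd: (x \in drop l p); last by rewrite orbF andNb.
  by rewrite orbT andbT; apply/esym; apply: dt.
move: ha hb; rewrite mem_arrangements // mem_permutations => /and3P [ua _ /allP aU] pb.
apply: perm_trans (perm_cat (perm_filter_mem uU ua aU) pb) _.
exact/permPl/perm_filterC.
Qed.

Lemma count_sum (T : Type) (P : pred T) (s : seq T) : count P s = \sum_(x <- s) P x.
Proof. by rewrite -sum1_count big_mkcond. Qed.

Lemma size_filter_notin (U a : seq nat) : uniq U -> uniq a -> {subset a <= U} ->
  size [seq x <- U | x \notin a] = size U - size a.
Proof.
move=> uU ua aU; have /permPl/perm_size := perm_filterC (mem a) U.
by rewrite size_cat -(perm_size (perm_filter_mem uU ua aU)) => <-; rewrite addKn.
Qed.

Lemma count_perms_take_drop P Q U l :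
  order_invariant P -> order_invariant Q -> uniq U -> l <= size U ->
  count (fun p => P (take l p) && Q (drop l p)) (permutations U)
  = 'C(size U, l) * count_perms P (iota 1 l) * count_perms Q (iota 1 (size U - l)).
Proof.
move=> invP invQ uU lU.
rewrite count_sum (perm_big _ (perm_permutations_arrangements uU lU)) big_allpairs_dep /=.
rewrite (eq_big_seq (fun a => P a * count_perms Q (iota 1 (size U - l)))); last first.
  move=> a; rewrite mem_arrangements // => /and3P [ua /eqP sa /allP aU].
  under eq_bigr do rewrite take_size_cat // drop_size_cat // -mulnb.
  rewrite -big_distrr -count_sum -sa -(size_filter_notin uU ua aU).
  by rewrite -count_perms_std // filter_uniq.
rewrite -big_distrl big_allpairs_dep /=.
rewrite (eq_big_seq (fun => 1 * count_perms P (iota 1 l))); last first.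
  move=> A; rewrite mem_ksubseqs // => /andP [sA /eqP <-].
  by rewrite mul1n -count_sum -count_perms_std // (subseq_uniq sA uU).
by rewrite -big_distrl sum1_size size_ksubseqs.
Qed.

(** * Permutations of [n] *)

Lemma pword_inj n : injective (@pword n).
Proof.
move=> p1 p2 e; apply/permP => i.
by have := (eq_in_map _ _ _).2 e i; rewrite mem_enum => /(_ isT) [] /val_inj.
Qed.

Lemma perm_pword n (p : 'S_n) : perm_eq (pword p) (iota 1 n).
Proof.
apply: uniq_perm; rewrite ?iota_uniq //.
  by rewrite map_inj_uniq ?enum_uniq // => i j /= [] /val_inj; apply: perm_inj.
move=> x; rewrite mem_iota add1n; apply/mapP/andP => [[i _ ->]|[x1 x2]].
  by split; rewrite ?ltnS ?ltn_ord.
have xn : x.-1 < n by lia.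
by exists (p^-1 (Ordinal xn))%g; rewrite ?mem_enum // permKV /=; lia.
Qed.

Lemma card_pword n (P : pred (seq nat)) :
  #|[set p : 'S_n | P (pword p)]| = count P (permutations (iota 1 n)).
Proof.
rewrite -sum1_card (eq_bigl (fun p => P (pword p))) => [|p]; last by rewrite inE.
rewrite sum1_count -(count_map (@pword n) P); apply/seq.permP.
have uw : uniq (map (@pword n) (index_enum 'S_n)).
  by rewrite map_inj_uniq ?index_enum_uniq //; apply: pword_inj.
apply: uniq_perm; rewrite ?permutations_uniq //.
have sub : {subset map (@pword n) (index_enum 'S_n) <= permutations (iota 1 n)}.
  by move=> s /mapP [p _ ->]; rewrite mem_permutations perm_pword.
suff /(uniq_min_size uw sub) [_ E] :
  size (permutations (iota 1 n)) <= size (map (@pword n) (index_enum 'S_n)) by [].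
rewrite size_map size_permutations ?iota_uniq // size_iota -card_Sn cardT enumT.
by rewrite /index_enum locked_withE.
Qed.

Definition ballot_stats i j (s : seq nat) := ballot s && (pk s == i) && (des s == j).

(* [pk s = k - i] and [des s = d - l + j], written without subtraction. *)
Definition ballot_stats_shift i k l d j (s : seq nat) :=
  [&& ballot s, pk s + i == k & des s + l == d + j].

Lemma ballot_stats_rev_order_invariant i j : order_invariant (fun a => ballot_stats i j (rev a)).
Proof.
apply: (@desw_order_invariant _
  (fun w => [&& ballotw (rev (map negb w)), peaksw w == i & count negb w == j])) => s us.
have ur : uniq (rev s) by rewrite rev_uniq.
rewrite /ballot_stats (ballot_desw ur) (pk_desw ur) des_desw (desw_rev us).
by rewrite peaksw_rev_negb count_rev count_map andbA.
Qed.

Lemma ballot_stats_shift_order_invariant i k l d j : order_invariant (ballot_stats_shift i k l d j).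
Proof.
apply: (@desw_order_invariant _
  (fun w => [&& ballotw w, peaksw w + i == k & count id w + l == d + j])) => s us.
by rewrite /ballot_stats_shift (ballot_desw us) (pk_desw us) des_desw.
Qed.

Lemma perm_map_rev_permutations (U : seq nat) : perm_eq (map rev (permutations U)) (permutations U).
Proof.
apply: uniq_perm; rewrite ?(map_inj_uniq (can_inj revK)) ?permutations_uniq //.
move=> t; rewrite mem_permutations; apply/mapP/idP => [[u]|pt].
  by rewrite mem_permutations => pu ->; rewrite perm_rev.
by exists (rev t); rewrite ?revK // mem_permutations perm_rev.
Qed.

Lemma bcount_rev l i j :
  bcount l i j = count (fun a => ballot_stats i j (rev a)) (permutations (iota 1 l)).
Proof.
rewrite /bcount (card_pword l (ballot_stats i j)).
by rewrite -(seq.permP (perm_map_rev_permutations _)) count_map.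
Qed.

Lemma pz_count (n k d : nat) :
  pz n k d = count (fun s => (pk s == k) && (des s == d)) (permutations (iota 1 n)).
Proof. exact: card_pword. Qed.

Lemma pz_pred_count (n k d : nat) : pz n k (d%:Z - 1)%R =
  count (fun s => (pk s == k) && ((des s).+1 == d)) (permutations (iota 1 n)).
Proof.
case: d => [|d]; last by rewrite (_ : (d.+1%:Z - 1)%R = d) ?pz_count //; lia.
by rewrite /= (eq_count (a2 := pred0)) ?count_pred0 // => s; rewrite andbF.
Qed.

Lemma bz_shift_count (m i k l d j : nat) :
  bz m (k%:Z - i%:Z)%R (d%:Z - l%:Z + j%:Z)%R
  = count (ballot_stats_shift i k l d j) (permutations (iota 1 m)).
Proof.
case E1: (k%:Z - i%:Z)%R => [a|a]; last first.
  rewrite /= (eq_count (a2 := pred0)) ?count_pred0 // => b /=.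
  by rewrite /ballot_stats_shift; case: eqP; rewrite ?andbF //; lia.
case E2: (d%:Z - l%:Z + j%:Z)%R => [c|c]; last first.
  rewrite /= (eq_count (a2 := pred0)) ?count_pred0 // => b /=.
  by rewrite /ballot_stats_shift; case: (des b + l =P d + j); rewrite ?andbF //; lia.
rewrite /= /bcount (card_pword m (ballot_stats a c)); apply: eq_count => b.
rewrite /ballot_stats /ballot_stats_shift; case: (ballot b) => //=.
by apply/andP/andP => -[/eqP h1 /eqP h2]; split; apply/eqP; lia.
Qed.

Lemma sum_ord_single N a (F : nat -> nat) : a < N -> (forall i, i != a -> F i = 0) ->
  \sum_(i < N) F i = F a.
Proof.
move=> aN F0; rewrite (bigD1 (Ordinal aN)) //= big1 ?addn0 // => i /eqP ne.
by apply: F0; apply/eqP => ia; apply: ne; apply: val_inj.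
Qed.

Lemma sum_bool_ord_le m (b : 'I_m -> bool) : \sum_(i < m) b i <= m.
Proof. by rewrite -[leqRHS]card_ord -sum1_card; apply: leq_sum => i _; apply: leq_b1. Qed.

Lemma sum_ballot_stats_split p n k d l : size p = n -> l <= n ->
  \sum_(i < n.+1) \sum_(j < n.+1)
     (ballot_stats i j (rev (take l p)) && ballot_stats_shift i k l d j (drop l p))
  = ballot_split k d l p.
Proof.
move=> sp ln; set s := rev (take l p); set t := drop l p.
have szs : size s <= n by rewrite size_rev size_take; case: ifP; lia.
have pks : pk s < n.+1 by apply: leq_trans (sum_bool_ord_le _) _; lia.
have dess : des s < n.+1 by apply: leq_trans (sum_bool_ord_le _) _; lia.
rewrite (@sum_ord_single _ (pk s)
    (fun i => \sum_(j < n.+1) (ballot_stats i j s && ballot_stats_shift i k l d j t))) //;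
  last by move=> i ne; apply: big1 => j _; rewrite /ballot_stats eq_sym (negbTE ne) andbF.
rewrite (@sum_ord_single _ (des s)
    (fun j => ballot_stats (pk s) j s && ballot_stats_shift (pk s) k l d j t)) //;
  last by move=> j ne; rewrite /ballot_stats [des s == j]eq_sym (negbTE ne) andbF.
rewrite /ballot_stats /ballot_stats_shift /ballot_split -/s -/t !eqxx (addnC (pk t)) !andbT.
by case: (ballot s).
Qed.

Lemma sum_bz_ballot_split n k d l : l <= n ->
  \sum_(i < n.+1) \sum_(j < n.+1)
     'C(n, l) * bz l i j * bz (n - l)%N (k%:Z - i%:Z)%R (d%:Z - l%:Z + j%:Z)%R
  = \sum_(p <- permutations (iota 1 n)) ballot_split k d l p.
Proof.
move=> ln.
have split_count (i j : nat) :
    'C(n, l) * bz l i j * bz (n - l)%N (k%:Z - i%:Z)%R (d%:Z - l%:Z + j%:Z)%R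
  = \sum_(p <- permutations (iota 1 n))
      (ballot_stats i j (rev (take l p)) && ballot_stats_shift i k l d j (drop l p)).
  rewrite [bz l i j]/= bcount_rev bz_shift_count -count_sum.
  rewrite (count_perms_take_drop (P := fun a => ballot_stats i j (rev a))
                                 (Q := ballot_stats_shift i k l d j)) ?size_iota ?iota_uniq //.
    exact: ballot_stats_rev_order_invariant.
  exact: ballot_stats_shift_order_invariant.
transitivity (\sum_(i < n.+1) \sum_(p <- permutations (iota 1 n)) \sum_(j < n.+1)
    (ballot_stats i j (rev (take l p)) && ballot_stats_shift i k l d j (drop l p))).
  by apply: eq_bigr => i _; rewrite -exchange_big; apply: eq_bigr => j _; apply: split_count.
rewrite exchange_big; apply: eq_big_seq => p; rewrite mem_permutations => pp.
by rewrite sum_ballot_stats_split // (perm_size pp) size_iota.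
Qed.

(* The empty permutation has the single split [l = 0]: this is why
   [(n, k, d) = (0, 0, 1)] is excluded. *)
Lemma sum_ballot_split_nil k d : (k, d) != (0, 1) ->
  \sum_(l < 1) ballot_split k d l [::]
  = ((pk [::] == k) && (des [::] == d)) + ((pk [::] == k) && ((des [::]).+1 == d)).
Proof.
have b0 : ballot [::] by apply/forallP => -[].
rewrite big_ord1 /ballot_split /= b0 /pk /des /= !big_ord0.
by case: k => [|k]; case: d => [|[|d]].
Qed.

Theorem theorem3p1 (n k d : nat) :
  (n, k, d) != (0%N, 0%N, 1%N) ->
  (pz n k d + pz n k (d%:Z - 1)%R)%N =
  \sum_(l < n.+1) \sum_(i < n.+1) \sum_(j < n.+1)
     'C(n, l) * bz l i j * bz (n - l)%N (k%:Z - i%:Z)%R (d%:Z - l%:Z + j%:Z)%R.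
Proof.
move=> nkd; rewrite pz_count pz_pred_count !count_sum -big_split /=.
rewrite (eq_bigr (fun l : 'I_n.+1 => \sum_(p <- permutations (iota 1 n)) ballot_split k d l p));
  last by move=> l _; rewrite sum_bz_ballot_split // -ltnS.
rewrite exchange_big /=; apply: eq_big_seq => p; rewrite mem_permutations => pp.
have up : uniq p by rewrite (perm_uniq pp) iota_uniq.
have sp : size p = n by rewrite (perm_size pp) size_iota.
case: n nkd pp sp => [|n] nkd pp sp; last by rewrite -sp sum_ballot_split ?sp.
by move/size0nil: sp => ->; rewrite sum_ballot_split_nil //; case: k d nkd => [|k] [|[|d]].
Qed.
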